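(* For every finite subset $B\subseteq A$ and every $c\in A\setminus\mathrm{Cl}(B)$, there exists a permutation $\pi\in\mathcal{G}$ that fixes $B$ pointwise and satisfies $\pi(c)\neq c$.
   Context: Let $\langle P,\preccurlyeq,\preccurlyeq^\ast\rangle$ be a doubly ordered set: $\preccurlyeq$ a partial order on $P$, $\preccurlyeq^\ast$ a preorder on $P$, and $p\preccurlyeq q\Rightarrow p\preccurlyeq^\ast q$. Write $p\prec q$ for ($p\preccurlyeq q$ and $p\neq q$). For a quadruple $\langle x_0,x_1,x_2,x_3\rangle$ and $i<4$, $\mathrm{pr}_i(\langle x_0,x_1,x_2,x_3\rangle)=x_i$. For a set $S$, $\mathscr{S}(S)$ is the set of permutations of $S$. Define recursively $A_0=\{\langle0,p,\varnothing,k\rangle\mid p\in P,k\in\omega\}$ and $A_{n+1}=A_n\cup\{\langle n+1,q,a,0\rangle\mid q\in P,a\in A_n,\mathrm{pr}_1(a)\prec q\}\cup\{\langle n+1,q,a,k\rangle\mid q\in P,a\in A_n,\mathrm{pr}_1(a)\not\preccurlyeq q,\mathrm{pr}_1(a)\preccurlyeq^\ast q,k\in\omega\}$; let $A=\bigcup_{n}A_n$. Define $\mathcal{G}_0=\{f\in\mathscr{S}(A_0)\mid \mathrm{pr}_1(f(a))=\mathrm{pr}_1(a)\text{ for all }a\in A_0\}$; for $f\in\mathscr{S}(A_{n+1})$, $f\in\mathcal{G}_{n+1}$ iff $f{\upharpoonright}A_n\in\mathcal{G}_n$ and for all $b\in A_{n+1}\setminus A_n$, $\mathrm{pr}_1(f(b))=\mathrm{pr}_1(b)$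 and $\mathrm{pr}_2(f(b))=f(\mathrm{pr}_2(b))$. Let $\mathcal{G}=\{\pi\in\mathscr{S}(A)\mid \pi{\upharpoonright}A_n\in\mathcal{G}_n\text{ for all }n\}$. A subset $C\subseteq A$ is closed if (i) for all $n\in\omega$, all $a\in C\cap A_n$ and all $q\in P$ with $\mathrm{pr}_1(a)\prec q$, we have $\langle n+1,q,a,0\rangle\in C$, and (ii) for all $b\in C\setminus A_0$, $\mathrm{pr}_2(b)\in C$. For $B\subseteq A$, $\mathrm{Cl}(B)$ is the least closed subset of $A$ including $B$. *)

From Stdlib Require Import List.

(* Quadruples <n, p, a, k>; the second component a is either the empty set
   (None, only at level 0) or an element of A (Some a). *)
Inductive quad (P : Type) : Type :=
  Q : nat -> P -> option (quad P) -> nat -> quad P.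
Arguments Q {P} _ _ _ _.

Definition pr0 {P} (x : quad P) : nat := let 'Q n _ _ _ := x in n.
Definition pr1 {P} (x : quad P) : P := let 'Q _ p _ _ := x in p.
Definition pr2 {P} (x : quad P) : option (quad P) := let 'Q _ _ a _ := x in a.
Definition pr3 {P} (x : quad P) : nat := let 'Q _ _ _ k := x in k.

Section Defs.
Context {P : Type} (le lestar : P -> P -> Prop).

Definition lt (p q : P) : Prop := le p q /\ p <> q.

Fixpoint An (n : nat) (x : quad P) : Prop :=
  match n with
  | 0 => exists p k, x = Q 0 p None k
  | S m =>
      An m x
      \/ (exists q a, An m a /\ lt (pr1 a) q /\ x = Q (S m) q (Some a) 0)
      \/ (exists q a k, An m a /\ ~ le (pr1 a) q /\ lestar (pr1 a) q
                        /\ x = Q (S m) q (Some a) k)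
  end.

Definition inA (x : quad P) : Prop := exists n, An n x.

Definition isPermOn (S : quad P -> Prop) (f : quad P -> quad P) : Prop :=
  (forall x, S x -> S (f x))
  /\ (forall x y, S x -> S y -> f x = f y -> x = y)
  /\ (forall y, S y -> exists x, S x /\ f x = y).

(* Gn n f  :<->  f restricted to A_n belongs to G_n *)
Fixpoint Gn (n : nat) (f : quad P -> quad P) : Prop :=
  match n with
  | 0 => isPermOn (An 0) f /\ (forall a, An 0 a -> pr1 (f a) = pr1 a)
  | S m =>
      isPermOn (An (S m)) f /\ Gn m f
      /\ (forall b, An (S m) b -> ~ An m b ->
            pr1 (f b) = pr1 b /\ pr2 (f b) = option_map f (pr2 b))
  end.

(* pi in G, pi seen as a function on quadruples whose restriction to A is a
   permutation of A *)
Definition inG (pi : quad P -> quad P) : Prop :=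
  isPermOn inA pi /\ forall n, Gn n pi.

Definition closed (C : quad P -> Prop) : Prop :=
  (forall x, C x -> inA x)
  /\ (forall n a q, C a -> An n a -> lt (pr1 a) q -> C (Q (S n) q (Some a) 0))
  /\ (forall b, C b -> ~ An 0 b -> exists a, pr2 b = Some a /\ C a).

Definition Cl (B : quad P -> Prop) (x : quad P) : Prop :=
  forall C, closed C -> (forall y, B y -> C y) -> C x.

Definition finite_set (B : quad P -> Prop) : Prop :=
  exists l : list (quad P), forall x, B x <-> In x l.

End Defs.

(* Some element u of the parent chain of c lies outside Cl(B) and has a free
   last index: it sits on level 0 or hangs below a parent a with
   pr1 a not <= pr1 u, so every Q n p o k with the same n, p, o is in A.
   Swapping u with such a sibling v, whose index exceeds every index occurring
   in the chains of B, and propagating the swap up along the parent links,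
   gives an involution in G.  It fixes B, because Cl(B) is closed downwards
   along chains and v is too large to occur in them, and it moves c, whose
   chain contains u. *)
From Stdlib Require Import List Arith Lia ClassicalEpsilon.

Section Chains.
Context {P : Type}.

Definition opt_pred (R : quad P -> Prop) (o : option (quad P)) : Prop :=
  match o with Some a => R a | None => True end.

(* The generated [quad_ind] has no hypothesis for the nested [option]. *)
Fixpoint quad_ind_nested (R : quad P -> Prop)
  (H : forall n p o k, opt_pred R o -> R (Q n p o k)) (x : quad P) : R x :=
  match x with
  | Q n p o k => H n p o k
      (match o as o0 return opt_pred R o0 with
       | None => I
       | Some a => quad_ind_nested R H a
       end)
  end.

Fixpoint in_chain (y x : quad P) : Prop :=
  y = x \/ match x with Q _ _ (Some a) _ => in_chain y a | _ => False end.

Fixpoint depth (x : quad P) : nat :=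
  match x with Q _ _ None _ => 0 | Q _ _ (Some a) _ => S (depth a) end.

Fixpoint max_index (x : quad P) : nat :=
  match x with Q _ _ None k => k | Q _ _ (Some a) k => max k (max_index a) end.

Lemma in_chain_depth (y x : quad P) : in_chain y x -> depth y <= depth x.
Proof.
  revert y; induction x as [n p o k IH] using quad_ind_nested; intros y [->|H]; auto.
  destruct o as [a|]; [|contradiction]. simpl in IH |- *. specialize (IH y H). lia.
Qed.

Lemma in_chain_max_index (y x : quad P) : in_chain y x -> pr3 y <= max_index x.
Proof.
  revert y; induction x as [n p o k IH] using quad_ind_nested; intros y [->|H].
  - destruct o; simpl; lia.
  - destruct o as [a|]; [|contradiction]. simpl in IH |- *. specialize (IH y H). lia.
Qed.

Lemma in_chain_depth_inj (y1 y2 x : quad P) :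
  in_chain y1 x -> in_chain y2 x -> depth y1 = depth y2 -> y1 = y2.
Proof.
  revert y1 y2; induction x as [n p o k IH] using quad_ind_nested;
    intros y1 y2 [->|H1] [->|H2] E; auto;
    destruct o as [a|]; try contradiction; simpl in IH, E.
  - apply in_chain_depth in H2. lia.
  - apply in_chain_depth in H1. lia.
  - eauto.
Qed.

Definition swap_dec (A : Prop) : {A} + {~ A} := excluded_middle_informative A.

Fixpoint swap (u v x : quad P) : quad P :=
  match x with
  | Q n p o k =>
      if swap_dec (Q n p o k = u) then v
      else if swap_dec (Q n p o k = v) then u
      else Q n p (option_map (swap u v) o) k
  end.

Lemma swap_l (u v : quad P) : swap u v u = v.
Proof. destruct u; simpl. destruct (swap_dec _); tauto. Qed.

Lemma swap_r (u v : quad P) : u <> v -> swap u v v = u.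
Proof.
  intro Huv. destruct v; simpl.
  destruct (swap_dec _) as [e|]; [congruence|]. destruct (swap_dec _); tauto.
Qed.

Lemma swap_other (u v : quad P) n p o k :
  Q n p o k <> u -> Q n p o k <> v ->
  swap u v (Q n p o k) = Q n p (option_map (swap u v) o) k.
Proof. intros Hu Hv; simpl. destruct (swap_dec _); [tauto|]. destruct (swap_dec _); tauto. Qed.

Lemma swap_id (u v x : quad P) : ~ in_chain u x -> ~ in_chain v x -> swap u v x = x.
Proof.
  induction x as [n p o k IH] using quad_ind_nested; intros Hu Hv.
  rewrite swap_other by (intro E; subst; simpl in *; tauto).
  destruct o as [a|]; auto. simpl in IH |- *.
  rewrite IH; auto; intro; [apply Hu | apply Hv]; right; auto.
Qed.

End Chains.

Section SwapSiblings.
Context {P : Type} (n0 : nat) (p0 : P) (o0 : option (quad P)) (k0 k1 : nat).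

Let u := Q n0 p0 o0 k0.
Let v := Q n0 p0 o0 k1.

Lemma swap_siblings_parent (w : quad P) : o0 = Some w -> swap u v w = w.
Proof.
  intros Ho. apply swap_id; intro H; apply in_chain_depth in H;
    unfold u, v in H; subst o0; simpl in H; lia.
Qed.

Lemma swap_siblings_pr1 (x : quad P) : pr1 (swap u v x) = pr1 x.
Proof.
  destruct x as [n p o k]; simpl.
  destruct (swap_dec _) as [e|]; [injection e; intros; simpl; congruence|].
  destruct (swap_dec _) as [e|]; [injection e; intros; simpl; congruence|]. auto.
Qed.

Lemma swap_siblings_map_parent : option_map (swap u v) o0 = o0.
Proof.
  assert (H : forall o, o = o0 -> option_map (swap u v) o = o).
  { intros [w|] Ho; simpl; [rewrite swap_siblings_parent|]; auto. }
  exact (H o0 eq_refl).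
Qed.

Lemma swap_siblings_pr2 (x : quad P) : pr2 (swap u v x) = option_map (swap u v) (pr2 x).
Proof.
  pose proof swap_siblings_map_parent as Hparent.
  destruct x as [n p o k]; simpl.
  destruct (swap_dec _) as [e|]; [injection e; intros; subst; auto|].
  destruct (swap_dec _) as [e|]; [injection e; intros; subst; auto|]. reflexivity.
Qed.

Hypothesis k0_k1 : k0 <> k1.

Lemma swap_siblings_neq : u <> v.
Proof. unfold u, v; intro E; injection E; auto. Qed.

Lemma swap_siblings_involutive (x : quad P) : swap u v (swap u v x) = x.
Proof.
  pose proof swap_siblings_neq as Huv.
  induction x as [n p o k IH] using quad_ind_nested.
  destruct (swap_dec (Q n p o k = u)) as [->|Hu];
    [rewrite swap_l, swap_r; auto|].
  destruct (swap_dec (Q n p o k = v)) as [->|Hv];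
    [rewrite swap_r, swap_l; auto|].
  rewrite swap_other by assumption.
  (* The swap fixes the common parent of u and v, so by induction it cannot
     map any other node onto u or v. *)
  assert (Himage : forall k', Q n p (option_map (swap u v) o) k = Q n0 p0 o0 k' ->
                              Q n p o k = Q n0 p0 o0 k').
  { intros k' E. injection E; intros -> Eo -> ->. f_equal.
    rewrite <- swap_siblings_map_parent, <- Eo.
    destruct o as [a|]; simpl in IH |- *; [rewrite IH|]; reflexivity. }
  rewrite swap_other by (intro E; apply Himage in E; auto).
  destruct o as [a|]; auto. simpl in IH |- *. rewrite IH. reflexivity.
Qed.

Lemma swap_siblings_in_chain (x : quad P) : in_chain u x -> in_chain v (swap u v x).
Proof.
  induction x as [n p o k IH] using quad_ind_nested; intros H.
  destruct (swap_dec (Q n p o k = u)) as [->|Hu]; [rewrite swap_l; left; auto|].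
  destruct (swap_dec (Q n p o k = v)) as [Ev|Hv].
  { rewrite Ev in H. exfalso. apply swap_siblings_neq.
    exact (in_chain_depth_inj u v v H (or_introl eq_refl) eq_refl). }
  rewrite swap_other by assumption.
  destruct H as [H|H]; [congruence|].
  destruct o as [a|]; [|contradiction]. right. simpl in IH |- *. auto.
Qed.

End SwapSiblings.

Lemma involution_isPermOn {P} (S : quad P -> Prop) (f : quad P -> quad P) :
  (forall x, f (f x) = x) -> (forall x, S x -> S (f x)) -> isPermOn S f.
Proof.
  intros Hinv HS. split; [exact HS|split].
  - intros x y _ _ E. rewrite <- (Hinv x), <- (Hinv y), E. reflexivity.
  - intros y Hy. exists (f y). auto.
Qed.

Section Structure.
Context {P : Type} (le lestar : P -> P -> Prop).

(* The last index of [Q n p o k] in A is arbitrary exactly for such nodes. *)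
Definition free_index (p : P) (o : option (quad P)) : Prop :=
  match o with None => True | Some a => ~ le (pr1 a) p end.

Lemma An_cases n x : An le lestar n x ->
  (exists p k, x = Q 0 p None k) \/
  (exists m q a k, x = Q (S m) q (Some a) k /\ An le lestar m a /\
     ((lt le (pr1 a) q /\ k = 0) \/ (~ le (pr1 a) q /\ lestar (pr1 a) q))).
Proof.
  revert x; induction n as [|n IHn]; intros x H; simpl in H; [auto|].
  destruct H as [H|[(q&a&H1&H2&->)|(q&a&k&H1&H2&H3&->)]].
  - exact (IHn x H).
  - right. exists n, q, a, 0. auto.
  - right. exists n, q, a, k. auto.
Qed.

Lemma An_sibling n0 p0 o0 k k' :
  free_index p0 o0 -> forall n, An le lestar n (Q n0 p0 o0 k) -> An le lestar n (Q n0 p0 o0 k').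
Proof.
  intros Hfree n. induction n as [|n IHn]; simpl.
  - intros (p&k''&E). injection E; intros; subst. eauto.
  - intros [H|[(q&a&_&Hlt&E)|(q&a&k''&Ha&Hnl&Hs&E)]].
    + left; auto.
    + injection E; intros; subst. destruct Hlt; contradiction.
    + injection E; intros; subst. right; right. exists q, a, k'. auto.
Qed.

Lemma swap_siblings_An n0 p0 o0 k0 k1 :
  free_index p0 o0 ->
  forall n x, An le lestar n x -> An le lestar n (swap (Q n0 p0 o0 k0) (Q n0 p0 o0 k1) x).
Proof.
  intros Hfree n. induction n as [|n IHn]; intros x H;
    (destruct (swap_dec (x = Q n0 p0 o0 k0)) as [->|Hu];
      [rewrite swap_l; exact (An_sibling _ _ _ _ _ Hfree _ H)|]);
    (destruct (swap_dec (x = Q n0 p0 o0 k1)) as [->|Hv];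
      [destruct (Nat.eq_dec k0 k1) as [->|Hk];
        [rewrite swap_l | rewrite swap_r by (intro E; injection E; auto)];
        exact (An_sibling _ _ _ _ _ Hfree _ H)|]);
    destruct x as [m p o k]; rewrite swap_other by assumption.
  - destruct H as (p'&k'&E). injection E; intros; subst. simpl; eauto.
  - destruct H as [H|[(q&a&Ha&Hlt&E)|(q&a&k'&Ha&Hnl&Hs&E)]].
    + left. specialize (IHn _ H). rewrite swap_other in IHn by assumption. exact IHn.
    + injection E; intros; subst. right; left.
      exists q, (swap (Q n0 p0 o0 k0) (Q n0 p0 o0 k1) a).
      rewrite swap_siblings_pr1. auto.
    + injection E; intros; subst. right; right.
      exists q, (swap (Q n0 p0 o0 k0) (Q n0 p0 o0 k1) a), k'.
      rewrite swap_siblings_pr1. auto.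
Qed.

Lemma swap_siblings_inG n0 p0 o0 k0 k1 :
  free_index p0 o0 -> k0 <> k1 -> inG le lestar (swap (Q n0 p0 o0 k0) (Q n0 p0 o0 k1)).
Proof.
  intros Hfree Hk.
  pose proof (swap_siblings_An n0 p0 o0 k0 k1 Hfree) as HAn.
  pose proof (swap_siblings_involutive n0 p0 o0 k0 k1 Hk) as Hinv.
  split.
  - apply involution_isPermOn; [exact Hinv|]. intros x [n Hn]. exists n; auto.
  - intro n. induction n as [|n IHn]; (split; [exact (involution_isPermOn _ _ Hinv (HAn _))|]).
    + intros; apply swap_siblings_pr1.
    + split; [exact IHn|].
      intros b _ _. split; [apply swap_siblings_pr1 | apply swap_siblings_pr2].
Qed.

Lemma Cl_in_chain B (x y : quad P) : Cl le lestar B x -> in_chain y x -> Cl le lestar B y.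
Proof.
  intros Hx Hy C HC HB. specialize (Hx C HC HB). clear HB.
  destruct HC as (_&_&Hdown). revert y Hy Hx.
  induction x as [n p o k IH] using quad_ind_nested; intros y [->|H] Hx; auto.
  destruct o as [a|]; [|contradiction].
  destruct (Hdown _ Hx) as (a'&Ea&Ca); [intros (?&?&E); discriminate|].
  simpl in Ea. injection Ea; intros <-. exact (IH y H Ca).
Qed.

(* Following forced links (pr1 a < q, index 0) downwards stays outside Cl B,
   since Cl B is closed under them; the first unforced node has a free index. *)
Lemma free_index_in_chain B (x : quad P) :
  inA le lestar x -> ~ Cl le lestar B x ->
  exists n0 p0 o0 k0, in_chain (Q n0 p0 o0 k0) x /\ ~ Cl le lestar B (Q n0 p0 o0 k0)
    /\ free_index p0 o0.
Proof.
  induction x as [n p o k IH] using quad_ind_nested; intros [N HN] HC.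
  destruct (An_cases _ _ HN) as [(p'&k'&E)|(m&q&a&k'&E&Ha&[[Hlt ->]|[Hnl _]])];
    injection E; intros; subst.
  - exists 0, p', None, k'. repeat split; auto. left; reflexivity.
  - simpl in IH. destruct (IH (ex_intro _ m Ha)) as (n0&p0&o0&k0&H1&H2&H3).
    { intro Hc. apply HC. intros C HCl HB.
      pose proof HCl as (_&Hforced&_). exact (Hforced m a q (Hc C HCl HB) Ha Hlt). }
    exists n0, p0, o0, k0. split; [right; exact H1|]. auto.
  - exists (S m), q, (Some a), k'. split; [left; reflexivity|]. auto.
Qed.

End Structure.

Lemma max_index_le_list_max {P} (l : list (quad P)) b :
  In b l -> max_index b <= list_max (map max_index l).
Proof.
  intro Hb. assert (Hall := proj1 (list_max_le (map max_index l) _) (le_n _)).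
  rewrite Forall_forall in Hall. apply Hall, in_map, Hb.
Qed.

Theorem lemma2p4 (P : Type) (le lestar : P -> P -> Prop)
  (le_refl : forall p, le p p)
  (le_antisym : forall p q, le p q -> le q p -> p = q)
  (le_trans : forall p q r, le p q -> le q r -> le p r)
  (lestar_refl : forall p, lestar p p)
  (lestar_trans : forall p q r, lestar p q -> lestar q r -> lestar p r)
  (le_lestar : forall p q, le p q -> lestar p q)
  (B : quad P -> Prop) (c : quad P) :
  finite_set B ->
  (forall x, B x -> inA le lestar x) ->
  inA le lestar c ->
  ~ Cl le lestar B c ->
  exists pi : quad P -> quad P,
    inG le lestar pi /\ (forall x, B x -> pi x = x) /\ pi c <> c.
Proof.
  intros [l Hl] _ HcA HcCl.
  destruct (free_index_in_chain le lestar B c HcA HcCl) as (n0&p0&o0&k0&Hu&HuCl&Hfree).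
  set (k1 := S (k0 + list_max (map max_index l))).
  assert (Hk : k0 <> k1) by (unfold k1; lia).
  exists (swap (Q n0 p0 o0 k0) (Q n0 p0 o0 k1)).
  split; [|split].
  - exact (swap_siblings_inG le lestar n0 p0 o0 k0 k1 Hfree Hk).
  - intros x Hx. apply swap_id.
    + intro H. apply HuCl. apply (Cl_in_chain le lestar B x); auto.
      intros C _ HB. exact (HB x Hx).
    + intro H. apply in_chain_max_index in H. apply Hl, max_index_le_list_max in Hx.
      unfold k1 in H. simpl in H. lia.
  - intro E. pose proof (swap_siblings_in_chain n0 p0 o0 k0 k1 Hk c Hu) as Hv.
    rewrite E in Hv. apply (swap_siblings_neq n0 p0 o0 k0 k1 Hk).
    apply (in_chain_depth_inj _ _ _ Hu Hv). destruct o0; reflexivity.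
Qed.
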